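(* Let $s\ge 3$ be an integer, let $a,a_3,\dots,a_s\in\mathbb{R}$, and let \[ \psi(z)=\frac{1+\left(1-as\right)z+\left(\tfrac12-as+a^2\binom{s}{2}\right)z^2+\sum_{n=3}^{s}a_nz^n}{(1-az)^s}. \] (Every element of $\widehat{\Pi}_{s/s,2}$ can be written in this form.) If $R(\psi)>s-1$, then $a>0$.
   Context: A real rational function $\psi$ is always considered in lowest terms, as a smooth function on $\mathbb{R}$ minus its finitely many poles. It is absolutely monotonic at $x\in\mathbb{R}$ if $x$ is not a pole and $\psi^{(k)}(x)\ge 0$ for all integers $k\ge 0$. The radius of absolute monotonicity is $R(\psi)=\sup\big(\{r\in[0,\infty): \psi \text{ is absolutely monotonic at each point of } [-r,0]\}\cup\{0\}\big)\in[0,+\infty]$. $\widehat{\Pi}_{s/s,2}$ denotes the set of real rational functions $\psi(z)=P(z)/(1-az)^s$ with $P$ a real polynomial of degree at most $s$ and $a\in\mathbb{R}$, such that $\psi(z)-e^z=O(z^3)$ as $z\to0$. *)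

From Stdlib Require Import Reals Lra Lia.
Open Scope R_scope.

(* psi is absolutely monotonic at x: x is not a pole of (the lowest-terms
   rational function) psi and all derivatives of psi at x are >= 0.
   We express "x is not a pole" and "the k-th derivative exists" by the
   existence, on some interval around x, of a tower of functions D k with
   D 0 = psi on the punctured interval (so a removable singularity of the
   formula at x is filled in, as in lowest terms) and D (k+1) = (D k)'. *)
Definition abs_monotonic_at (psi : R -> R) (x : R) : Prop :=
  exists (delta : R) (D : nat -> R -> R),
    0 < delta /\
    (forall y, Rabs (y - x) < delta -> y <> x -> D O y = psi y) /\
    (forall (k : nat) (y : R), Rabs (y - x) < delta ->
        derivable_pt_lim (D k) y (D (S k) y)) /\
    (forall k : nat, 0 <= D k x).

(* The set whose supremum is the radius of absolute monotonicity R(psi). *)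
Definition am_radius_set (psi : R -> R) (r : R) : Prop :=
  r = 0 \/
  (0 <= r /\ forall x, -r <= x <= 0 -> abs_monotonic_at psi x).

Definition am_radius_gt (psi : R -> R) (c : R) : Prop :=
  exists r, am_radius_set psi r /\ c < r.

Definition psi_family (s : nat) (a : R) (an : nat -> R) (z : R) : R :=
  (1 + (1 - a * INR s) * z
     + (/ 2 - a * INR s + a ^ 2 * C s 2) * z ^ 2
     + sum_f 3 s (fun n => an n * z ^ n))
  / (1 - a * z) ^ s.

(* Suppose a <= 0.  Choose x0 in [-R(psi), 0), to the right of the pole 1/a,
   at which the expression in step 3 is negative (test_point_exists; this
   is where R(psi) > s - 1 is used).
   1. Multiplying psi by (1 - a z)^s keeps all derivatives at x0 nonnegative
      (Leibniz rule, every factor being nonnegative since a <= 0), so all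
      derivatives of the polynomial P are nonnegative at x0
      (abs_monotonic_times_linear_pow).
   2. For any polynomial P of degree <= N whose derivatives are all
      nonnegative at x0 < 0, an exact Taylor expansion around x0 gives
      (N - 1) P'(0) + x0 P''(0) >= 0 (tower_first_derivatives_inequality).
   3. For our P this reads (s-1)(1 - a s) + x0 (1 - 2as + a^2 s(s-1)) >= 0,
      contradicting the choice of x0.
   Derivatives are handled through "towers": sequences of functions each of
   which is the derivative of the previous one, on an interval or globally. *)

From Stdlib Require Import Reals Lra Lia.
Open Scope R_scope.

Lemma derivable_pt_lim_ext (f g : R -> R) (y l l' : R) :
  (forall z, f z = g z) -> l = l' ->
  derivable_pt_lim f y l -> derivable_pt_lim g y l'.
Proof.
  intros Efg El Hf eps Heps; destruct (Hf eps Heps) as [d Hd]; exists d.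
  intros h Hh Hhd; rewrite <- !Efg, <- El; now apply Hd.
Qed.

Lemma derivable_pt_lim_affine (c d y : R) :
  derivable_pt_lim (fun z => c + d * z) y d.
Proof.
  apply (derivable_pt_lim_ext (fct_cte c + mult_real_fct d id)%F _ _ (0 + d * 1)).
  - intro; reflexivity.
  - ring.
  - apply derivable_pt_lim_plus; [apply derivable_pt_lim_const|].
    apply derivable_pt_lim_scal, derivable_pt_lim_id.
Qed.

Lemma derivable_pt_lim_local (f g : R -> R) (x0 del y l : R) :
  (forall z, Rabs (z - x0) < del -> f z = g z) -> Rabs (y - x0) < del ->
  derivable_pt_lim f y l -> derivable_pt_lim g y l.
Proof.
  intros Efg Hy Hf eps Heps; destruct (Hf eps Heps) as [d Hd].
  assert (Hpos : 0 < Rmin d (del - Rabs (y - x0))).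
  { apply Rmin_pos; [apply cond_pos | lra]. }
  exists (mkposreal _ Hpos); simpl; intros h Hh Hhd.
  assert (Hd' : Rabs h < d) by (eapply Rlt_le_trans; [exact Hhd | apply Rmin_l]).
  assert (Hdel : Rabs h < del - Rabs (y - x0))
    by (eapply Rlt_le_trans; [exact Hhd | apply Rmin_r]).
  rewrite <- !Efg; [now apply Hd | exact Hy |].
  replace (y + h - x0) with ((y - x0) + h) by ring.
  eapply Rle_lt_trans; [apply Rabs_triang | lra].
Qed.

Lemma continuous_vanishing_punctured (h : R -> R) (x del : R) :
  0 < del -> continuity_pt h x ->
  (forall y, Rabs (y - x) < del -> y <> x -> h y = 0) -> h x = 0.
Proof.
  intros Hdel Hh Hzero; destruct (Req_dec (h x) 0) as [|Hnz]; [assumption|].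
  exfalso; assert (Heps : 0 < Rabs (h x)) by now apply Rabs_pos_lt.
  destruct (Hh _ Heps) as [alpha [Halpha Hnear]].
  set (m := Rmin del alpha).
  assert (Hm : 0 < m) by now apply Rmin_pos.
  assert (Hmdel : m <= del) by apply Rmin_l.
  assert (Hmalpha : m <= alpha) by apply Rmin_r.
  set (y := x + m / 2).
  assert (Hyx : Rabs (y - x) = m / 2).
  { unfold y; replace (x + m / 2 - x) with (m / 2) by ring; apply Rabs_right; lra. }
  assert (Hneq : x <> y) by (unfold y; intro Hxy; lra).
  assert (Hy : h y = 0) by (apply Hzero; [lra | auto]).
  assert (Hclose : R_dist (h y) (h x) < Rabs (h x)).
  { apply Hnear; split; [split; [exact I | exact Hneq] | simpl; unfold R_dist; lra]. }
  unfold R_dist in Hclose; rewrite Hy, Rminus_0_l, Rabs_Ropp in Hclose; lra.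
Qed.

Lemma continuous_agree_punctured (f g : R -> R) (x del : R) :
  0 < del -> continuity_pt f x -> continuity_pt g x ->
  (forall y, Rabs (y - x) < del -> y <> x -> f y = g y) -> f x = g x.
Proof.
  intros Hdel Hf Hg Efg.
  assert (H : (f - g)%F x = 0).
  { apply (continuous_vanishing_punctured _ x del Hdel).
    - now apply continuity_pt_minus.
    - intros y Hy Hyx; unfold minus_fct; rewrite Efg by assumption; ring. }
  unfold minus_fct in H; lra.
Qed.

Definition tower_on (D : nat -> R -> R) (x0 del : R) : Prop :=
  forall k y, Rabs (y - x0) < del -> derivable_pt_lim (D k) y (D (S k) y).

Definition tower (D : nat -> R -> R) : Prop :=
  forall k y, derivable_pt_lim (D k) y (D (S k) y).

(* Two towers on the same interval whose zeroth terms agree off the centre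
   agree everywhere on the interval (continuity fills in the centre, then
   uniqueness of derivatives propagates the equality up the tower). *)
Lemma tower_on_agree (T P : nat -> R -> R) (x0 del : R) :
  0 < del -> tower_on T x0 del -> tower_on P x0 del ->
  (forall y, Rabs (y - x0) < del -> y <> x0 -> T O y = P O y) ->
  forall k y, Rabs (y - x0) < del -> T k y = P k y.
Proof.
  intros Hdel HT HP E0 k; induction k as [|k IH]; intros y Hy.
  - destruct (Req_dec y x0) as [->|Hyx]; [|now apply E0].
    assert (Hc : Rabs (x0 - x0) < del) by (rewrite Rminus_diag, Rabs_R0; lra).
    apply (continuous_agree_punctured _ _ x0 del Hdel); [| |exact E0].
    + apply derivable_continuous_pt; exists (T 1%nat x0); now apply HT.
    + apply derivable_continuous_pt; exists (P 1%nat x0); now apply HP.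
  - apply (uniqueness_limite (T k) y); [now apply HT|].
    apply (derivable_pt_lim_local (P k) (T k) x0 del); [|exact Hy|now apply HP].
    intros z Hz; symmetry; now apply IH.
Qed.

(* Leibniz rule for the product with the linear factor 1 - a y:
   ((1 - a y) D)^(k) = (1 - a y) D^(k) + k (-a) D^(k-1). *)
Definition times_linear (a : R) (D : nat -> R -> R) (k : nat) (y : R) : R :=
  (1 - a * y) * D k y + INR k * (- a) * D (pred k) y.

Lemma times_linear_tower (a : R) (D : nat -> R -> R) (x0 del : R) :
  tower_on D x0 del -> tower_on (times_linear a D) x0 del.
Proof.
  intros HD k y Hy; unfold times_linear.
  assert (Hlin : derivable_pt_lim (fun y => 1 - a * y) y (- a)).
  { apply (derivable_pt_lim_ext (fun z => 1 + (- a) * z) _ _ (- a));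
      [intro; ring | reflexivity | apply derivable_pt_lim_affine]. }
  assert (Hprod := derivable_pt_lim_mult _ _ _ _ _ Hlin (HD k y Hy)).
  destruct k as [|k]; simpl pred.
  - eapply derivable_pt_lim_ext; [| |exact Hprod];
      [intro z; unfold mult_fct; simpl; ring | simpl; ring].
  - assert (Hlow := derivable_pt_lim_scal _ (INR (S k) * - a) _ _ (HD k y Hy)).
    eapply derivable_pt_lim_ext; [| |exact (derivable_pt_lim_plus _ _ _ _ _ Hprod Hlow)].
    + intro; reflexivity.
    + rewrite (S_INR (S k)); ring.
Qed.

Definition times_linear_pow (a : R) (m : nat) (D : nat -> R -> R) : nat -> R -> R :=
  Nat.iter m (times_linear a) D.

Lemma times_linear_pow_tower (a : R) (m : nat) (D : nat -> R -> R) (x0 del : R) :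
  tower_on D x0 del -> tower_on (times_linear_pow a m D) x0 del.
Proof.
  intros HD; induction m as [|m IH]; [exact HD|].
  now apply times_linear_tower.
Qed.

Lemma times_linear_pow_0 (a : R) (m : nat) (D : nat -> R -> R) (y : R) :
  times_linear_pow a m D O y = (1 - a * y) ^ m * D O y.
Proof.
  induction m as [|m IH]; simpl; [ring|].
  unfold times_linear; fold (times_linear_pow a m D); rewrite IH; simpl; ring.
Qed.

(* When a <= 0 and 1 - a x0 >= 0, every term of the Leibniz expansion is a
   product of nonnegative factors, so nonnegativity of all derivatives at x0
   is preserved. *)
Lemma times_linear_pow_nonneg (a : R) (m : nat) (D : nat -> R -> R) (x0 : R) :
  a <= 0 -> 0 <= 1 - a * x0 -> (forall k, 0 <= D k x0) ->
  forall k, 0 <= times_linear_pow a m D k x0.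
Proof.
  intros Ha Hx0 HD; induction m as [|m IH]; intro k; [apply HD|].
  simpl; unfold times_linear; fold (times_linear_pow a m D).
  apply Rplus_le_le_0_compat; apply Rmult_le_pos; auto.
  apply Rmult_le_pos; [apply pos_INR | lra].
Qed.

Lemma sum_f_R0_single (f : nat -> R) (N j : nat) : (j <= N)%nat ->
  (forall n, (n <= N)%nat -> n <> j -> f n = 0) -> sum_f_R0 f N = f j.
Proof.
  induction N as [|N IH]; intros Hj Hf; simpl.
  - now replace j with O by lia.
  - destruct (Nat.eq_dec j (S N)) as [->|Hne].
    + rewrite sum_eq_R0 by (intros n Hn; apply Hf; lia); ring.
    + rewrite IH, (Hf (S N)) by (lia || intros; apply Hf; lia); ring.
Qed.

Fixpoint falling (n k : nat) : R :=
  match k with O => 1 | S k' => falling n k' * (INR n - INR k') end.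

Lemma falling_zero (n k : nat) : (n < k)%nat -> falling n k = 0.
Proof.
  induction k as [|k IH]; intros Hnk; [lia|simpl].
  destruct (Nat.eq_dec n k) as [->|Hne]; [ring|].
  rewrite IH by lia; ring.
Qed.

(* The k-th derivative of the polynomial with coefficients p and degree <= N. *)
Definition poly_tower (p : nat -> R) (N k : nat) (z : R) : R :=
  sum_f_R0 (fun n => p n * falling n k * z ^ (n - k)) N.

Lemma monomial_tower_derivative (c : R) (n k : nat) (y : R) :
  derivable_pt_lim (fun z => c * falling n k * z ^ (n - k)) y
    (c * falling n (S k) * y ^ (n - S k)).
Proof.
  assert (Hmon := derivable_pt_lim_scal _ (c * falling n k) _ _
                    (derivable_pt_lim_pow y (n - k))).
  eapply derivable_pt_lim_ext; [intro; reflexivity | | exact Hmon].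
  simpl; destruct (Compare_dec.le_lt_dec k n) as [Hkn|Hkn].
  - rewrite minus_INR by exact Hkn.
    replace (pred (n - k)) with (n - S k)%nat by lia; ring.
  - rewrite falling_zero by exact Hkn; ring.
Qed.

Lemma poly_tower_is_tower (p : nat -> R) (N : nat) : tower (poly_tower p N).
Proof.
  intros k y; unfold poly_tower; induction N as [|N IH]; simpl.
  - apply monomial_tower_derivative.
  - apply (derivable_pt_lim_plus
             (fun z => sum_f_R0 (fun n => p n * falling n k * z ^ (n - k)) N)
             (fun z => p (S N) * falling (S N) k * z ^ (S N - k)));
      [exact IH | apply monomial_tower_derivative].
Qed.

Lemma poly_tower_vanish (p : nat -> R) (N k : nat) (z : R) :
  (N < k)%nat -> poly_tower p N k z = 0.
Proof.
  intros Hk; apply sum_eq_R0; intros n Hn; rewrite falling_zero by lia; ring.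
Qed.

Lemma poly_tower_at_0 (p : nat -> R) (N k : nat) :
  (k <= N)%nat -> poly_tower p N k 0 = p k * falling k k.
Proof.
  intros Hk; unfold poly_tower; rewrite (sum_f_R0_single _ N k Hk).
  - now rewrite Nat.sub_diag, pow_O, Rmult_1_r.
  - intros n Hn Hne; destruct (Compare_dec.le_lt_dec n k).
    + rewrite falling_zero by lia; ring.
    + rewrite pow_i by lia; ring.
Qed.

Definition taylor_sum (G : nat -> R -> R) (w : R) (m : nat) (z : R) : R :=
  sum_f_R0 (fun k => G k z / INR (Factorial.fact k) * (w - z) ^ k) m.

(* As a function of the centre z the Taylor polynomial telescopes: its
   derivative is the single term G^(m+1)(z) (w - z)^m / m!. *)
Lemma taylor_sum_derivative (G : nat -> R -> R) (w : R) (m : nat) (y : R) :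
  tower G ->
  derivable_pt_lim (taylor_sum G w m) y (G (S m) y / INR (Factorial.fact m) * (w - y) ^ m).
Proof.
  intros HG; induction m as [|m IH]; unfold taylor_sum in *.
  - eapply derivable_pt_lim_ext; [| |apply (HG O y)]; intros; simpl; field.
  - assert (Hpow : derivable_pt_lim (fun z => (w - z) ^ S m) y
                     (INR (S m) * (w - y) ^ m * (-1))).
    { assert (Hlin : derivable_pt_lim (fun z => w - z) y (-1)).
      { apply (derivable_pt_lim_ext (fun z => w + (-1) * z) _ _ (-1));
          [intro; ring | reflexivity | apply derivable_pt_lim_affine]. }
      eapply derivable_pt_lim_ext;
        [| |exact (derivable_pt_lim_comp _ _ _ _ _ Hlin (derivable_pt_lim_pow (w - y) (S m)))];
        [intro; reflexivity | simpl pred; ring]. }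
    assert (Hterm := derivable_pt_lim_mult _ _ _ _ _
      (derivable_pt_lim_scal _ (/ INR (Factorial.fact (S m))) _ _ (HG (S m) y)) Hpow).
    cbn [sum_f_R0].
    eapply derivable_pt_lim_ext; [| |exact (derivable_pt_lim_plus _ _ _ _ _ IH Hterm)].
    + intro z; unfold plus_fct, mult_fct, mult_real_fct; simpl pow; unfold Rdiv; ring.
    + unfold mult_fct, mult_real_fct; rewrite fact_simpl, mult_INR; simpl pow.
      field; split; [apply INR_fact_neq_0 | apply not_0_INR; lia].
Qed.

(* Taylor's formula is exact for a tower whose (m+1)-th term vanishes:
   the Taylor polynomial has zero derivative in its centre, so (by the mean
   value theorem) its value at the centre x0 equals its value at w, G(w). *)
Lemma taylor_exact (G : nat -> R -> R) (m : nat) (x0 w : R) :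
  tower G -> (forall z, G (S m) z = 0) -> x0 < w ->
  G O w = taylor_sum G w m x0.
Proof.
  intros HG Hvanish Hx0.
  assert (pr : derivable (taylor_sum G w m)).
  { intro y; eexists; now apply taylor_sum_derivative. }
  destruct (MVT_cor1 _ x0 w pr Hx0) as [c [Hc _]].
  rewrite (derive_pt_eq_0 _ _ _ _ (taylor_sum_derivative G w m c HG)), Hvanish in Hc.
  assert (Hw : taylor_sum G w m w = G O w).
  { unfold taylor_sum; rewrite (sum_f_R0_single _ m O); [simpl; field | lia |].
    intros n _ Hn; rewrite Rminus_diag, pow_i by lia; ring. }
  unfold Rdiv in Hc; rewrite !Rmult_0_l in Hc; lra.
Qed.

(* If P is the tower of a function whose derivatives of
   order > N vanish and all P^(k)(x0) >= 0 at some x0 < 0, then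
   (N - 1) P'(0) + x0 P''(0) >= 0.  Indeed L_j = (N-1-j) P^(j+1) - (z-x0) P^(j+2)
   is again a tower (L_j' = L_(j+1)), it vanishes from j = N on, and
   L_j(x0) = (N-1-j) P^(j+1)(x0) >= 0 for j < N; exact Taylor expansion of L_0
   around x0 evaluated at 0 gives L_0(0) >= 0. *)
Lemma tower_first_derivatives_inequality (P : nat -> R -> R) (N : nat) (x0 : R) :
  tower P -> (1 <= N)%nat -> (forall k z, (N < k)%nat -> P k z = 0) ->
  x0 < 0 -> (forall k, 0 <= P k x0) ->
  0 <= (INR N - 1) * P 1%nat 0 + x0 * P 2%nat 0.
Proof.
  intros HP HN Hvanish Hx0 Hpos.
  set (L := fun j z => (INR N - 1 - INR j) * P (S j) z - (z - x0) * P (S (S j)) z).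
  assert (HL : tower L).
  { intros j y; unfold L.
    assert (Hscal := derivable_pt_lim_scal _ (INR N - 1 - INR j) _ _ (HP (S j) y)).
    assert (Hlin : derivable_pt_lim (fun z => z - x0) y 1).
    { apply (derivable_pt_lim_ext (fun z => - x0 + 1 * z) _ _ 1);
        [intro; ring | reflexivity | apply derivable_pt_lim_affine]. }
    assert (Hprod := derivable_pt_lim_mult _ _ _ _ _ Hlin (HP (S (S j)) y)).
    eapply derivable_pt_lim_ext; [| |exact (derivable_pt_lim_minus _ _ _ _ _ Hscal Hprod)].
    + intro; reflexivity.
    + unfold mult_real_fct, mult_fct; rewrite (S_INR j); ring. }
  assert (HLvanish : forall z, L (S (pred N)) z = 0).
  { intro z; unfold L; rewrite !Hvanish by lia; ring. }
  assert (HLpos : forall k, 0 <= L k x0).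
  { intros k; unfold L; rewrite Rminus_diag, Rmult_0_l, Rminus_0_r.
    destruct (Compare_dec.le_lt_dec N k) as [HNk|HkN].
    - rewrite Hvanish by lia; lra.
    - apply Rmult_le_pos; [|apply Hpos].
      assert (HSk : INR (S k) <= INR N) by (apply le_INR; lia).
      rewrite S_INR in HSk; lra. }
  assert (HL0 : 0 <= L O 0).
  { rewrite (taylor_exact L (pred N) x0 0 HL HLvanish Hx0); apply cond_pos_sum.
    intros k; apply Rmult_le_pos; [apply Rmult_le_pos|].
    - apply HLpos.
    - left; apply Rinv_0_lt_compat, INR_fact_lt_0.
    - apply pow_le; lra. }
  unfold L in HL0; simpl INR in HL0; lra.
Qed.

Lemma abs_monotonic_times_linear_pow (f : R -> R) (P : nat -> R -> R) (a x0 : R) (m : nat) :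
  a <= 0 -> 0 < 1 - a * x0 -> tower P ->
  (forall y, 0 < 1 - a * y -> (1 - a * y) ^ m * f y = P O y) ->
  abs_monotonic_at f x0 -> forall k, 0 <= P k x0.
Proof.
  intros Ha Hx0 HP Hf [delta [D [Hdelta [HD0 [HD Hpos]]]]].
  set (del := Rmin delta ((1 - a * x0) / (1 - a))).
  assert (Hdel : 0 < del) by (apply Rmin_pos; [lra | apply Rdiv_lt_0_compat; lra]).
  assert (Hdel_delta : del <= delta) by apply Rmin_l.
  assert (Hfactor : forall y, Rabs (y - x0) < del -> 0 < 1 - a * y).
  { intros y Hy.
    assert (Hbound : Rabs (y - x0) * (1 - a) < 1 - a * x0).
    { replace (1 - a * x0) with ((1 - a * x0) / (1 - a) * (1 - a)) by (field; lra).
      apply Rmult_lt_compat_r; [lra|].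
      eapply Rlt_le_trans; [exact Hy | apply Rmin_r]. }
    assert (Hle := Rle_abs (- (y - x0))); rewrite Rabs_Ropp in Hle.
    nra. }
  set (T := times_linear_pow a m D).
  assert (HT : tower_on T x0 del).
  { apply times_linear_pow_tower; intros k y Hy; apply HD; lra. }
  assert (HTP : forall k y, Rabs (y - x0) < del -> T k y = P k y).
  { apply tower_on_agree; [exact Hdel | exact HT | intros k y _; apply HP |].
    intros y Hy Hyx; unfold T; rewrite times_linear_pow_0, HD0 by lra.
    now apply Hf, Hfactor. }
  intro k; rewrite <- (HTP k x0) by (rewrite Rminus_diag, Rabs_R0; lra).
  apply times_linear_pow_nonneg; [exact Ha | lra | exact Hpos].
Qed.

(* Choice of the evaluation point: for a <= 0 and a radius r > S - 1 there is
   x0 in [-r, 0), to the right of the pole 1/a, at which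
   (S - 1)(1 - a S) + x0 (1 - 2 a S + a^2 S (S - 1)) is negative.
   Writing t = -x0, this expression is (1 - aS)((S-1) - t(1 - a(S-1))) + a t,
   so t = min(r, S / (1 - a S)) works. *)
Lemma test_point_exists (S a r : R) : 1 <= S -> a <= 0 -> S - 1 < r ->
  exists x0, - r <= x0 < 0 /\ 0 < 1 - a * x0 /\
    (S - 1) * (1 - a * S) + x0 * (1 - 2 * a * S + a ^ 2 * S * (S - 1)) < 0.
Proof.
  intros HS Ha Hr.
  assert (HaS : 0 < 1 - a * S) by nra.
  set (q := S / (1 - a * S)).
  assert (Hq_pos : 0 < q) by (apply Rdiv_lt_0_compat; lra).
  assert (Hq_pole : - a * q < 1).
  { unfold q; apply (Rmult_lt_reg_r (1 - a * S)); [exact HaS|].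
    field_simplify; lra. }
  set (t := Rmin r q).
  assert (Ht_r : t <= r) by apply Rmin_l.
  assert (Ht_q : t <= q) by apply Rmin_r.
  assert (Ht_pos : 0 < t) by (apply Rmin_pos; lra).
  assert (Ht_big : S - 1 < t * (1 - a * (S - 1))).
  { unfold t, Rmin; destruct (Rle_dec r q).
    - assert (0 <= r * (- a) * (S - 1)) by (repeat apply Rmult_le_pos; lra); nra.
    - unfold q; apply (Rmult_lt_reg_r (1 - a * S)); [exact HaS|].
      field_simplify; lra. }
  exists (- t); split; [lra|split; [nra|]].
  replace ((S - 1) * (1 - a * S) + - t * (1 - 2 * a * S + a ^ 2 * S * (S - 1)))
    with ((1 - a * S) * ((S - 1) - t * (1 - a * (S - 1))) + a * t) by ring.
  assert (Hneg : (1 - a * S) * ((S - 1) - t * (1 - a * (S - 1))) < 0).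
  { apply Rmult_pos_neg; lra. }
  nra.
Qed.

Definition psi_coef (s : nat) (a : R) (an : nat -> R) (n : nat) : R :=
  match n with
  | O => 1
  | 1%nat => 1 - a * INR s
  | 2%nat => / 2 - a * INR s + a ^ 2 * C s 2
  | _ => an n
  end.

Lemma binomial_2 (s : nat) : (2 <= s)%nat -> C s 2 = INR s * (INR s - 1) / 2.
Proof.
  intros Hs; destruct s as [|[|t]]; try lia; unfold C.
  replace (S (S t) - 2)%nat with t by lia.
  rewrite !fact_simpl, !mult_INR, !S_INR; simpl.
  field; apply INR_fact_neq_0.
Qed.

Lemma psi_family_numerator (s : nat) (a : R) (an : nat -> R) (y : R) :
  (3 <= s)%nat -> 0 < 1 - a * y ->
  (1 - a * y) ^ s * psi_family s a an y = poly_tower (psi_coef s a an) s O y.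
Proof.
  intros Hs Hy; destruct s as [|[|[|t]]]; try lia.
  unfold psi_family, poly_tower, sum_f.
  replace (S (S (S t)) - 3)%nat with t by lia.
  rewrite (decomp_sum _ (S (S (S t)))) by lia; simpl pred.
  rewrite (decomp_sum _ (S (S t))) by lia; simpl pred.
  rewrite (decomp_sum _ (S t)) by lia; simpl pred.
  rewrite (sum_eq (fun i => psi_coef _ a an (S (S (S i))) * falling (S (S (S i))) 0
                            * y ^ (S (S (S i)) - 0))
                  (fun n => an (n + 3)%nat * y ^ (n + 3)))
    by (intros i _; replace (i + 3)%nat with (S (S (S i))) by lia; simpl; ring).
  simpl; field; split; [apply pow_nonzero|]; lra.
Qed.

Lemma psi_numerator_derivatives_at_0 (s : nat) (a : R) (an : nat -> R) :
  (3 <= s)%nat ->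
  poly_tower (psi_coef s a an) s 1 0 = 1 - a * INR s /\
  poly_tower (psi_coef s a an) s 2 0 =
    1 - 2 * a * INR s + a ^ 2 * INR s * (INR s - 1).
Proof.
  intros Hs; rewrite !poly_tower_at_0 by lia; simpl.
  rewrite binomial_2 by lia; split; field.
Qed.

Theorem mainTheorem2 (s : nat) (a : R) (an : nat -> R) :
  (3 <= s)%nat ->
  am_radius_gt (psi_family s a an) (INR s - 1) ->
  0 < a.
Proof.
  intros Hs [r [Hr Hlt]].
  assert (HS : 3 <= INR s) by (replace 3 with (INR 3) by (simpl; ring); now apply le_INR).
  destruct Hr as [-> | [_ Hall]]; [lra|].
  destruct (Rlt_or_le 0 a) as [Ha | Ha]; [exact Ha | exfalso].
  destruct (test_point_exists (INR s) a r) as [x0 [Hx0 [Hpole Hneg]]];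
    [lra | exact Ha | exact Hlt |].
  set (P := poly_tower (psi_coef s a an) s).
  assert (HP : tower P) by apply poly_tower_is_tower.
  assert (Hnonneg : forall k, 0 <= P k x0).
  { apply (abs_monotonic_times_linear_pow (psi_family s a an) P a x0 s Ha Hpole HP).
    - intros y Hy; now apply psi_family_numerator.
    - apply Hall; lra. }
  assert (Hineq := tower_first_derivatives_inequality P s x0 HP ltac:(lia)
                     (fun k z Hk => poly_tower_vanish _ _ _ z Hk) ltac:(lra) Hnonneg).
  destruct (psi_numerator_derivatives_at_0 s a an Hs) as [HP1 HP2].
  unfold P in Hineq; rewrite HP1, HP2 in Hineq; lra.
Qed.
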